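(* Let $a,b$ be integers and let $G\in\mathscr{G}_{a,b}$ be a graph containing a cycle and at least one pendant vertex, with base $\widetilde G$. (i) If $u\in V_{\widetilde G}$, then $d_G(u)\in\{d_{\widetilde G}(u),\,a+b-1\}$; if $u\notin V_{\widetilde G}$, then $d_G(u)=1$. (ii) If $u\in V_{\widetilde G}$ is an attached vertex, then $b\le -1$, $d_G(u)=a+b-1>d_{\widetilde G}(u)$, and $\sum_{v\in N_{\widetilde G}(u)}d_G(v)=-ab-b^2+2b+d_{\widetilde G}(u)$.
   Context: All graphs are simple and connected; $d_G(v)$ is the degree of $v$, $N_G(v)$ its neighbourhood. For integers $a,b$, $\mathscr{G}_{a,b}$ is the set of connected graphs $G$ such that for every $v\in V_G$, $\sum_{u\in N_G(v)}d_G(u)=a\,d_G(v)+b-d_G(v)^2$. A pendant vertex is a vertex of degree $1$. The base $\widetilde{G}$ of $G$ is the subgraph obtained from $G$ by repeatedly deleting pendant vertices until none remain. A vertex $u\in V_{\widetilde G}$ is called an attached vertex if it is adjacent in $G$ to some pendant vertex, and a non-attached vertex otherwise. *)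

(* Simple graphs as symmetric irreflexive relations on a finType. *)
From mathcomp Require Import all_boot all_order all_algebra.
Set Implicit Arguments. Unset Strict Implicit. Unset Printing Implicit Defensive.
Import Order.TTheory GRing.Theory Num.Theory.

Section Graphs.
Variable T : finType.
Variable e : rel T.

Definition simple_graph := symmetric e /\ irreflexive e.

Definition connected_graph := forall x y : T, connect e x y.

Definition nbhd (v : T) : {set T} := [set u | e v u].
Definition deg (v : T) : nat := #|nbhd v|.

Definition deg_in (S : {set T}) (v : T) : nat := #|[set u in S | e v u]|.

Definition has_cycle := exists s : seq T, [/\ 3 <= size s, uniq s & cycle e s].

Definition pendant (v : T) := deg v == 1.

Definition in_Gab (a b : int) :=
  connected_graph /\
  forall v : T, (\sum_(u in nbhd v) (deg u)%:Z = a * (deg v)%:Z + b - (deg v)%:Z ^+ 2)%R.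

Definition prune (S : {set T}) : {set T} := [set v in S | deg_in S v != 1].

(* vertex set of the base: iterate pruning; after #|T| steps a fixpoint is reached *)
Definition base : {set T} := iter #|T| prune [set: T].

Definition deg_base (v : T) : nat := deg_in base v.

Definition attached (u : T) := (u \in base) && [exists w, e u w && pendant w].

End Graphs.

From mathcomp Require Import all_boot all_order all_algebra.
From mathcomp Require Import zify ring lra.
Import Order.TTheory GRing.Theory Num.Theory.

(* The identity at a pendant vertex w reads deg u = a + b - 1 for its neighbour u.
   If such a u had at most one non-pendant neighbour p, the identity at u would
   give deg p = 1 - b (deg u - 1), and the identity at p then leaves room only for
   pendant neighbours of p besides u, because b (b + 1) and (k - 1) (k - 2) are
   nonnegative for integers b, k.  G would be a double star, without cycles.  So
   every attached vertex keeps two neighbours after pruning the pendant vertices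
   once, the pruning is then stable, and the base consists exactly of the
   non-pendant vertices; (i) and (ii) follow by splitting the identity at u into
   its base and pendant neighbours. *)

Set Implicit Arguments.
Unset Strict Implicit.
Unset Printing Implicit Defensive.

Lemma Posz_sum (I : finType) (P : pred I) (F : I -> nat) :
  (\sum_(i | P i) (F i)%:Z)%R = Posz (\sum_(i | P i) F i).
Proof. by rewrite (big_morph Posz PoszD (erefl (Posz 0))). Qed.

Lemma sum_le_card_eq1 (I : finType) (A : {pred I}) (F : I -> nat) :
  {in A, forall i, 0 < F i} -> \sum_(i in A) F i <= #|A| -> {in A, forall i, F i = 1}.
Proof.
move=> F_gt0 sumF_le i iA.
have [card_le /esym] := leqif_sum (fun j jA => leqif_eq (F_gt0 j jA)).
rewrite sum1_card in card_le *.
by rewrite eqn_leq card_le sumF_le => /forall_inP/(_ i iA)/eqP.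
Qed.

Lemma int_mul_succ_ge0 (x : int) : (0 <= x * (x + 1))%R.
Proof.
have [x_ge0 | x_lt0] := lerP 0 x; first by rewrite mulr_ge0 // ler_wpDr.
by rewrite -mulrNN mulr_ge0 //; lia.
Qed.

(* The difference of the two sides is [b (b + 1) (k - 1) (k - 2)]. *)
Lemma Gab_double_star_ineq (a b k q : int) :
  k = (a + b - 1)%R -> q = (1 - b * (k - 1))%R ->
  (a * q + b - q ^+ 2 <= k + q - 1)%R.
Proof.
move=> -> ->; rewrite -subr_ge0.
have -> : ((a + b - 1) + (1 - b * (a + b - 1 - 1)) - 1
          - (a * (1 - b * (a + b - 1 - 1)) + b - (1 - b * (a + b - 1 - 1)) ^+ 2)
       = (b * (b + 1)) * ((a + b - 3) * (a + b - 3 + 1)))%R by ring.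
by rewrite mulr_ge0 // int_mul_succ_ge0.
Qed.

Section PendantVertices.

Variables (T : finType) (e : rel T).

Definition nonpendant : {set T} := [set v | ~~ pendant e v].

Definition pendant_except (u p : T) := forall v, e u v -> v != p -> pendant e v.

Lemma deg_gt0 x y : e x y -> 0 < deg e x.
Proof. by move=> exy; apply/card_gt0P; exists y; rewrite inE. Qed.

Lemma nbhd_pendant w u : pendant e w -> e w u -> nbhd e w = [set u].
Proof.
move=> /cards1P [z nbhd_w] ewu.
have : u \in nbhd e w by rewrite inE.
by rewrite nbhd_w inE => /eqP ->.
Qed.

Lemma sum_nbhd_split (S : {set T}) v (F : T -> nat) :
  \sum_(u in nbhd e v) F u = \sum_(u in S | e v u) F u + \sum_(u in ~: S | e v u) F u.
Proof.
by rewrite (bigID (mem S)) /=; congr (_ + _); apply: eq_bigl => u; rewrite !inE andbC.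
Qed.

Lemma deg_split (S : {set T}) v : deg e v = deg_in e S v + deg_in e (~: S) v.
Proof. by rewrite /deg /deg_in -sum1_card (sum_nbhd_split S) !sum1dep_card. Qed.

Lemma deg_in_nonpendant v :
  ~~ [exists w, e v w && pendant e w] -> deg_in e nonpendant v = deg e v.
Proof.
move=> /existsPn no_pendant_nbr; apply: eq_card => u; rewrite !inE.
by have := no_pendant_nbr u; case: (e v u) => /= [->|]; rewrite ?andbF.
Qed.

Lemma prune_setT : prune e [set: T] = nonpendant.
Proof.
apply/setP => v; rewrite !inE /deg_in /pendant /deg.
by congr (_ != 1); apply: eq_card => u; rewrite !inE.
Qed.

Lemma base_prune_fixed (N : {set T}) :
  prune e [set: T] = N -> prune e N = N -> base e = N.
Proof.
move=> pruneT pruneN; rewrite /base.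
have [T0 | T_gt0] := posnP #|T|.
  by rewrite T0; apply/setP => v; have := card0_eq T0 v.
by rewrite -(prednK T_gt0) iterSr pruneT; elim: _.-1 => //= n ->.
Qed.

Hypothesis e_sym : symmetric e.

Lemma cycle_deg_gt1 (s : seq T) x :
  2 < size s -> uniq s -> cycle e s -> x \in s -> 1 < deg e x.
Proof.
move=> size_s uniq_s cycle_s /rot_to [i s' rot_s].
have : uniq (x :: s') by rewrite -rot_s rot_uniq.
have : cycle e (x :: s') by rewrite -rot_s rot_cycle.
have : 2 < size (x :: s') by rewrite -rot_s size_rot.
case: s' {rot_s} => [|y [|z r]] //= _.
rewrite rcons_path => /and3P [exy _ /andP [_ ex_last]].
case/and4P=> _ + _ _; rewrite inE negb_or => /andP [y_neq_z y_notin_r].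
apply/card_gt1P; exists y, (last z r); rewrite !inE exy e_sym ex_last; split=> //.
apply/eqP => y_last; have := mem_last z r.
by rewrite inE -y_last (negbTE y_neq_z) (negbTE y_notin_r).
Qed.

Lemma pendant_nbr_eq w u v : pendant e w -> e w u -> e w v -> v = u.
Proof.
move=> pw ewu ewv; have : v \in nbhd e w by rewrite inE.
by rewrite (nbhd_pendant pw ewu) inE => /eqP.
Qed.

Lemma double_star_no_cycle u p :
  connected_graph e -> e u p -> pendant_except u p -> pendant_except p u ->
  ~ has_cycle e.
Proof.
move=> conn eup u_star p_star [s [size_s uniq_s cycle_s]].
pose S := [pred x | [|| x == u, x == p, e u x | e p x]].
have S_closed_step x y : e x y -> x \in S -> y \in S.
  move=> exy; rewrite !inE => /or4P [/eqP x_u|/eqP x_p|eux|epx].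
  - by rewrite -x_u exy !orbT.
  - by rewrite -x_p exy !orbT.
  - have [x_p|x_neq_p] := eqVneq x p; first by rewrite -x_p exy !orbT.
    have exu : e x u by rewrite e_sym.
    by rewrite (pendant_nbr_eq (u_star x eux x_neq_p) exu exy) eqxx.
  - have [x_u|x_neq_u] := eqVneq x u; first by rewrite -x_u exy !orbT.
    have exp : e x p by rewrite e_sym.
    by rewrite (pendant_nbr_eq (p_star x epx x_neq_u) exp exy) eqxx orbT.
have S_closed : closed e S.
  by move=> x y exy; apply/idP/idP; apply: S_closed_step; rewrite // e_sym.
have [x x_s] : exists2 x, x \in s & x \notin [:: u; p].
  apply/allPn; apply: contraTN size_s => /allP s_sub.
  by rewrite -leqNgt (uniq_leq_size uniq_s s_sub).
have : x \in S by rewrite -(closed_connect S_closed (conn u x)) inE eqxx.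
have := cycle_deg_gt1 size_s uniq_s cycle_s x_s.
rewrite !inE negb_or => deg_x /or4P [/eqP->|/eqP->|eux|epx] /andP [x_neq_u x_neq_p].
- by rewrite eqxx in x_neq_u.
- by rewrite eqxx in x_neq_p.
- by rewrite (eqP (u_star x eux x_neq_p)) in deg_x.
- by rewrite (eqP (p_star x epx x_neq_u)) in deg_x.
Qed.

End PendantVertices.

Section Gab.

Variables (T : finType) (e : rel T) (a b : int).
Hypotheses (e_sym : symmetric e) (G_ab : in_Gab e a b).

Lemma sum_nbhd_deg v :
  Posz (\sum_(u in nbhd e v) deg e u) = (a * deg e v + b - (deg e v)%:Z ^+ 2)%R.
Proof. by rewrite -Posz_sum G_ab.2. Qed.

Lemma deg_nbr_pendant w u : pendant e w -> e w u -> Posz (deg e u) = (a + b - 1)%R.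
Proof.
move=> pw ewu; have := sum_nbhd_deg w.
by rewrite (nbhd_pendant pw ewu) big_set1 (eqP pw) => ->; ring.
Qed.

Lemma pendant_except_sym u p :
  e u p -> pendant_except e u p -> Posz (deg e u) = (a + b - 1)%R ->
  pendant_except e p u.
Proof.
move=> eup u_star deg_u.
have p_nbr_u : p \in nbhd e u by rewrite inE.
have u_nbr_p : u \in nbhd e p by rewrite inE e_sym.
set n := #|nbhd e u :\ p|.
have deg_uE : Posz (deg e u) = (n%:Z + 1)%R.
  by rewrite /deg (cardsD1 p) p_nbr_u add1n -addn1 PoszD.
have deg_p : Posz (deg e p) = (1 - b * ((deg e u)%:Z - 1))%R.
  have sum_u : \sum_(v in nbhd e u) deg e v = deg e p + n.
    rewrite (big_setD1 p p_nbr_u) /n -sum1_card; congr (_ + _); apply: eq_bigr => v.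
    by rewrite !inE => /andP [v_neq_p euv]; apply/eqP/u_star.
  have := sum_nbhd_deg u; rewrite sum_u PoszD deg_uE.
  have -> : a = (n%:Z + 2 - b)%R by move: deg_u; rewrite deg_uE; lia.
  by move=> sum_uE; apply: (addIr (Posz n)); rewrite sum_uE; ring.
have sum_p := sum_nbhd_deg p.
rewrite (big_setD1 u u_nbr_p) PoszD in sum_p.
have := Gab_double_star_ineq deg_u deg_p; rewrite -sum_p -addrA lerD2l.
have -> : Posz (deg e p) = (#|nbhd e p :\ u|%:Z + 1)%R.
  by rewrite /deg (cardsD1 u) u_nbr_p add1n -addn1 PoszD.
rewrite addrK lez_nat => rest_le.
move=> v epv v_neq_u; apply/eqP/(sum_le_card_eq1 _ rest_le); last by rewrite !inE v_neq_u.
by move=> x; rewrite !inE => /andP [_ epx]; apply: (deg_gt0 (y := p)); rewrite e_sym.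
Qed.

Hypothesis G_cycle : has_cycle e.

Lemma two_nonpendant_nbrs u w :
  pendant e w -> e u w -> 1 < deg_in e (nonpendant e) u.
Proof.
move=> pw euw; rewrite ltnNge; apply/negP => deg_le1.
have [p eup u_star] : exists2 p, e u p & pendant_except e u p.
  case: (pickP [pred v | (v \in nonpendant e) && e u v]) => [p /andP [p_np eup] | no_np].
    exists p => // v euv v_neq_p; apply/negPn/negP => v_np.
    move: deg_le1; rewrite leqNgt => /negP; apply; apply/card_gt1P.
    by rewrite inE in p_np; exists p, v; rewrite !inE p_np eup v_np euv eq_sym v_neq_p.
  exists w => // v euv _; apply/negPn/negP => v_np.
  by have := no_np v; rewrite /= euv andbT inE v_np.
have deg_u := deg_nbr_pendant pw (etrans (e_sym w u) euw).
have p_star := pendant_except_sym eup u_star deg_u.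
exact: (double_star_no_cycle e_sym G_ab.1 eup u_star p_star G_cycle).
Qed.

Lemma prune_nonpendant : prune e (nonpendant e) = nonpendant e.
Proof.
apply/setP => v; rewrite [in LHS]inE; case: (boolP (v \in nonpendant e)) => //= v_np.
have [/existsP [w /andP [evw pw]] | no_pendant_nbr] := boolP [exists w, e v w && pendant e w].
  by rewrite neq_ltn (two_nonpendant_nbrs pw evw) orbT.
by rewrite deg_in_nonpendant //; rewrite inE in v_np.
Qed.

Lemma base_nonpendant : base e = nonpendant e.
Proof. exact: base_prune_fixed (prune_setT e) prune_nonpendant. Qed.

Lemma pendant_nbr_degs u w : pendant e w -> e u w ->
  [/\ (b <= -1)%R,
      Posz (deg e u) = (a + b - 1)%R,
      (Posz (deg_in e (nonpendant e) u) < a + b - 1)%R &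
      (\sum_(v in nonpendant e | e u v) Posz (deg e v)
         = - (a * b) - b ^+ 2 + 2 * b + Posz (deg_in e (nonpendant e) u))%R].
Proof.
move=> pw euw; set N := nonpendant e.
set d := deg_in e N u; set c := deg_in e (~: N) u.
set S := \sum_(v in N | e u v) deg e v.
have deg_u : Posz (deg e u) = (a + b - 1)%R by apply: deg_nbr_pendant pw _; rewrite e_sym.
have deg_uE : deg e u = d + c := deg_split e N u.
have c_gt0 : 0 < c by apply/card_gt0P; exists w; rewrite !inE euw pw.
have d_gt1 : 1 < d := two_nonpendant_nbrs pw euw.
have S_ge : d + d <= S.
  rewrite /d /deg_in -sum1dep_card -big_split /=; apply: leq_sum => v /andP [v_N euv].
  have := deg_gt0 (y := u) (etrans (e_sym v u) euv); rewrite inE /pendant in v_N; lia.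
have sum_u : Posz (S + c) = (a * (d + c)%:Z + b - (d + c)%:Z ^+ 2)%R.
  rewrite -deg_uE -sum_nbhd_deg (sum_nbhd_split e N); congr (Posz (S + _)).
  rewrite /c /deg_in -sum1dep_card; apply: eq_bigr => v /andP [v_pendant _].
  by rewrite !inE negbK in v_pendant; rewrite (eqP v_pendant).
rewrite deg_uE in deg_u.
have a_eq : a = ((d + c)%:Z - b + 1)%R by lia.
have S_eq : Posz S = (d%:Z - b * ((d + c)%:Z - 1))%R.
  by apply: (addIr (Posz c)); rewrite -PoszD sum_u a_eq; ring.
rewrite Posz_sum -/S S_eq deg_uE; split; [|by []|lia|by rewrite a_eq; ring].
rewrite leNgt; apply/negP => b_gt0.
have : (0 <= b * ((d + c)%:Z - 1))%R by apply: mulr_ge0; lia.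
lia.
Qed.

End Gab.

Theorem lemma1p8 (T : finType) (e : rel T) (a b : int) :
  simple_graph e -> in_Gab e a b -> has_cycle e -> (exists w : T, pendant e w) ->
  (forall u : T, u \in base e ->
     ((Posz (deg e u)) = (Posz (deg_base e u)) \/ (Posz (deg e u)) = (a + b - 1)%R)) /\
  (forall u : T, u \notin base e -> deg e u = 1%N) /\
  (forall u : T, attached e u ->
     [/\ (b <= -1)%R,
         (Posz (deg e u)) = (a + b - 1)%R,
         ((Posz (deg_base e u)) < a + b - 1)%R &
         (\sum_(v in base e | e u v) (Posz (deg e v))
            = - (a * b) - b ^+ 2 + 2 * b + (Posz (deg_base e u)))%R]).
Proof.
move=> [e_sym _] G_ab G_cycle _.
have base_np := base_nonpendant e_sym G_ab G_cycle.
rewrite /deg_base base_np; split; [|split].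
- move=> u _.
  have [/existsP [w /andP [euw pw]] | no_pendant_nbr] := boolP [exists w, e u w && pendant e w].
    by right; apply: (deg_nbr_pendant G_ab pw); rewrite e_sym.
  by left; rewrite deg_in_nonpendant.
- by move=> u; rewrite inE negbK => /eqP.
- move=> u /andP [_ /existsP [w /andP [euw pw]]].
  exact: (pendant_nbr_degs e_sym G_ab G_cycle pw euw).
Qed.
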